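(* Let $\Omega\subset\mathbb{R}^d$ be a domain of finite measure. For $\Theta=(a,b)\in\mathbb{R}^d\times\mathbb{R}$ define $f_\Theta:\Omega\to\mathbb{R}$ by $f_\Theta(x):=H(a\cdot x+b)$, where $H$ is the Heaviside function. Then: 1. for any $\Theta_0=(a_0,b_0)$ with $a_0\ne0$ and any sequence $\{\Theta_n\}_{n\in\mathbb{N}}=\{(a_n,b_n)\}$ converging to $\Theta_0$, $f_{\Theta_n}\to f_{\Theta_0}$ almost everywhere in $\Omega$; 2. if in addition $\Omega$ is bounded, then for any degenerate parameter $\Theta_0=(0,b_0)$ there exists a non-degenerate $\Theta'=(a',b')$ (i.e. $a'\ne0$) such that $f_{\Theta_0}\equiv f_{\Theta'}$ in $\Omega$.
   Context: The Heaviside function is $H(t)=1$ for $t\ge0$ and $H(t)=0$ for $t<0$. *)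

From mathcomp Require Import all_boot all_algebra all_classical all_reals all_analysis.
Import GRing.Theory Num.Theory numFieldNormedType.Exports.
Set Implicit Arguments. Unset Strict Implicit. Unset Printing Implicit Defensive.
Local Open Scope ring_scope.
Local Open Scope classical_set_scope.

Definition heaviside (R : realType) (t : R) : R := if 0 <= t then 1 else 0.

Definition dotv (R : realType) (d : nat) (a x : 'rV[R]_d) : R :=
  \sum_(i < d) a ord0 i * x ord0 i.

Definition fTheta (R : realType) (d : nat) (a : 'rV[R]_d) (b : R) (x : 'rV[R]_d) : R :=
  heaviside (dotv a x + b).

Definition box (R : realType) (d : nat) (l u : 'rV[R]_d) : set 'rV[R]_d :=
  [set x | forall i, l ord0 i <= x ord0 i <= u ord0 i].
Definition box_vol (R : realType) (d : nat) (l u : 'rV[R]_d) : R :=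
  \prod_(i < d) (u ord0 i - l ord0 i).

Definition lebesgue_outer (R : realType) (d : nat) (A : set 'rV[R]_d) : \bar R :=
  ereal_inf [set s : \bar R | exists (l u : nat -> 'rV[R]_d),
     (forall n i, l n ord0 i <= u n ord0 i) /\
     A `<=` \bigcup_n box (l n) (u n) /\
     s = (\sum_(0 <= n <oo) (box_vol (l n) (u n))%:E)%E].

Definition lebesgue_null (R : realType) (d : nat) (A : set 'rV[R]_d) : Prop :=
  lebesgue_outer A = 0%E.

Definition domain (R : realType) (d : nat) (Om : set 'rV[R]_d) : Prop :=
  open Om /\ connected Om /\ Om !=set0.

From mathcomp Require Import all_boot all_algebra all_classical all_reals all_analysis.
From mathcomp Require Import ring lra.
Import order.Order.TTheory GRing.Theory Num.Theory numFieldNormedType.Exports.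

Set Implicit Arguments. Unset Strict Implicit. Unset Printing Implicit Defensive.
Local Open Scope ring_scope.
Local Open Scope classical_set_scope.

(* Off the hyperplane a0 . x + b0 = 0 the affine form a_n . x + b_n converges to a nonzero
   limit, so H(a_n . x + b_n) is eventually constant; hence f_{Theta_n} can only fail to
   converge on that hyperplane, which is Lebesgue-null when a0 <> 0.  On the cube [-M, M]^d, solve the hyperplane
   equation for a coordinate x_k with a0_k <> 0: over each of the N^(d-1) columns of width
   w = 2M/N in the other coordinates, x_k varies by at most 2 slope w, with
   slope = sum_i |a0_i| / |a0_k|, so the hyperplane is covered by boxes of total volume
   2 slope (2M)^d / N.  For a degenerate parameter, H(0 . x + b0) = H(b0) is constant,
   and a bounded domain lies in a slab |x_k| < c, on which H(x_k + c) = 1 and H(x_k - c) = 0. *)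

Lemma nneseries_pair (R : realType) (f : nat -> nat * nat) (u : nat * nat -> \bar R) :
  set_bij setT setT f -> (forall p, (0 <= u p)%E) ->
  (\sum_(n <oo) u (f n) = \sum_(i <oo) \sum_(j <oo) u (i, j))%E.
Proof.
move=> fbij u0.
rewrite nneseries_esumT // -(reindex_esum setT setT f u fbij).
rewrite nneseries_esumT; last by move=> i; exact: nneseries_ge0.
rewrite (eq_esum (b := fun i => \esum_(j in setT) u (i, j))); last first.
  by move=> i _; rewrite nneseries_esumT.
rewrite esum_esum //=.
by congr esum; [apply/seteqP; split => -[] | apply/funext => -[]].
Qed.

Section lebesgue_outer.
Variables (R : realType) (d : nat).
Implicit Types (A B : set 'rV[R]_d) (l u : 'rV[R]_d).

Lemma box_vol_ge0 l u : (forall i, l ord0 i <= u ord0 i) -> 0 <= box_vol l u.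
Proof. by move=> lu; apply: prodr_ge0 => i _; rewrite subr_ge0. Qed.

Lemma lebesgue_outer_ge0 A : (0 <= lebesgue_outer A)%E.
Proof.
apply/ereal_infP => _ [l [u [lu [_ ->]]]].
by apply: nneseries_ge0 => n _ _; rewrite lee_fin box_vol_ge0.
Qed.

Lemma le_lebesgue_outer A B : A `<=` B -> (lebesgue_outer A <= lebesgue_outer B)%E.
Proof.
move=> AB; apply: le_ereal_inf => _ [l [u [lu [Bcov ->]]]].
by exists l, u; split => //; split => //; apply: subset_trans Bcov.
Qed.

Lemma lebesgue_nullS A B : A `<=` B -> lebesgue_null B -> lebesgue_null A.
Proof.
move=> AB nullB; apply: le_anti; rewrite lebesgue_outer_ge0 andbT.
by rewrite -nullB le_lebesgue_outer.
Qed.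

Lemma lebesgue_nullP A :
  lebesgue_null A <-> forall e : R, 0 < e -> (lebesgue_outer A <= e%:E)%E.
Proof.
split=> [-> e e0|small]; first by rewrite lee_fin ltW.
apply: le_anti; rewrite lebesgue_outer_ge0 andbT.
by apply/lee_addgt0Pr => e e0; rewrite add0e small.
Qed.

Lemma lebesgue_outer_le_cover A (l u : nat -> 'rV[R]_d) :
  (forall n i, l n ord0 i <= u n ord0 i) -> A `<=` \bigcup_n box (l n) (u n) ->
  (lebesgue_outer A <= \sum_(0 <= n <oo) (box_vol (l n) (u n))%:E)%E.
Proof. by move=> lu Acov; apply: ereal_inf_lbound; exists l, u. Qed.

Lemma lebesgue_outer_le_fincover (T : finType) A (l u : T -> 'rV[R]_d) :
  (0 < d)%N -> (forall t i, l t ord0 i <= u t ord0 i) ->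
  A `<=` \bigcup_t box (l t) (u t) ->
  (lebesgue_outer A <= (\sum_t box_vol (l t) (u t))%:E)%E.
Proof.
move=> d_gt0 lu Acov.
(* Pad the finite family with the box [0, 0], whose volume vanishes because d > 0. *)
pose r := [seq Some t | t <- enum T].
pose corners (o : option T) := if o is Some t then (l t, u t) else (0, 0).
pose vol o := box_vol (corners o).1 (corners o).2.
have vol_None : vol None = 0.
  by rewrite /vol /box_vol (bigD1 (Ordinal d_gt0)) //= mxE subrr mul0r.
have vol_ge0 o : 0 <= vol o.
  by case: o => [t|]; [apply: box_vol_ge0 => i; apply: lu | rewrite vol_None].
pose L n := (corners (nth None r n)).1; pose U n := (corners (nth None r n)).2.
have LU n i : L n ord0 i <= U n ord0 i.
  by rewrite /L /U; case: (nth None r n) => [t|] //=; apply: lu.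
have Acov' : A `<=` \bigcup_n box (L n) (U n).
  move=> x /Acov[t _ xt]; exists (index t (enum T)) => //.
  by rewrite /L /U /r (nth_map t) ?nth_index ?index_mem ?mem_enum.
apply: le_trans (lebesgue_outer_le_cover LU Acov') _.
rewrite (nneseries_split 0 (size r)); last by move=> n _; rewrite lee_fin vol_ge0.
rewrite eseries0 ?adde0; last first.
  move=> n; rewrite add0n /L /U => /(nth_default None) -> _.
  by rewrite -[X in X%:E]/(vol None) vol_None.
by rewrite add0n sumEFin lee_fin -(big_nth None xpredT vol) big_map big_enum.
Qed.

Lemma lebesgue_null_bigcup (A : nat -> set 'rV[R]_d) :
  (forall m, lebesgue_null (A m)) -> lebesgue_null (\bigcup_m A m).
Proof.
move=> Anull; apply/lebesgue_nullP => e e0.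
have cover m : exists lu : (nat -> 'rV[R]_d) * (nat -> 'rV[R]_d),
    [/\ forall n i, lu.1 n ord0 i <= lu.2 n ord0 i,
        A m `<=` \bigcup_n box (lu.1 n) (lu.2 n) &
        (\sum_(0 <= n <oo) (box_vol (lu.1 n) (lu.2 n))%:E
           <= (e / (2 ^ m.+1)%:R)%:E)%E].
  have : (lebesgue_outer (A m) < (e / (2 ^ m.+1)%:R)%:E)%E.
    by rewrite Anull lte_fin divr_gt0.
  by move=> /ereal_inf_lt[_ [l [u [lu [Acov ->]]]] /ltW]; exists (l, u).
have [G HG] := choice cover.
have /card_esym/ppcard_eqP[f] := card_nat2.
pose vol p := (box_vol ((G p.1).1 p.2) ((G p.1).2 p.2))%:E.
have vol_ge0 p : (0 <= vol p)%E by rewrite lee_fin box_vol_ge0 //; case: (HG p.1).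
pose L n := (G (f n).1).1 (f n).2; pose U n := (G (f n).1).2 (f n).2.
have LU n i : L n ord0 i <= U n ord0 i by have [+ _ _] := HG (f n).1; apply.
have Acov : \bigcup_m A m `<=` \bigcup_n box (L n) (U n).
  move=> x [m _]; have [_ Acov _] := HG m; move=> /Acov[j _ xj].
  by exists (f^-1%FUN (m, j)) => //; rewrite /L /U invK ?inE.
apply: le_trans (lebesgue_outer_le_cover LU Acov) _.
rewrite (@nneseries_pair _ f vol bij) //.
apply: le_trans (epsilon_trick0 xpredT (ltW e0)).
apply: lee_nneseries => [m _ _|m _]; first exact: nneseries_ge0.
by have [_ _] := HG m.
Qed.

End lebesgue_outer.

Lemma exists_grid_cell (R : realType) (N : nat) (w z : R) :
  0 <= z <= N.+1%:R * w -> exists m : 'I_N.+1, m%:R * w <= z <= m.+1%:R * w.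
Proof.
elim: N => [|N IH] /andP[z_ge0 z_le]; first by exists ord0; rewrite mul0r z_ge0.
have [z_lt|z_gt] := leP z (N.+1%:R * w).
  have /IH[m m_cell] : 0 <= z <= N.+1%:R * w by rewrite z_ge0 z_lt.
  by exists (widen_ord (leqnSn _) m).
by exists ord_max; rewrite z_le ltW.
Qed.

Lemma row_coord_le_norm (R : realType) (d : nat) (x : 'rV[R]_d) (i : 'I_d) :
  `|x ord0 i| <= `|x|.
Proof.
rewrite (_ : `|x| = mx_norm x) // mx_normrE.
exact: (le_bigmax _ (fun ij : 'I_1 * 'I_d => `|x ij.1 ij.2|) (ord0, i)).
Qed.

Definition hyperplane {R : realType} {d : nat} (a : 'rV[R]_d) (b : R) : set 'rV[R]_d :=
  [set x | dotv a x + b = 0].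

Definition cube {R : realType} {d : nat} (M : R) : set 'rV[R]_d :=
  box (const_mx (- M)) (const_mx M).

Section hyperplane_null.
Variables (R : realType) (d : nat) (a : 'rV[R]_d) (b : R) (k : 'I_d).
Hypothesis ak : a ord0 k != 0.
Implicit Types x y : 'rV[R]_d.

Definition hyperplane_coord (y : 'rV[R]_d) : R :=
  - (b + \sum_(i | i != k) a ord0 i * y ord0 i) / a ord0 k.

Let slope := (\sum_i `|a ord0 i|) / `|a ord0 k|.

Let slope_ge0 : 0 <= slope.
Proof. by rewrite divr_ge0 // sumr_ge0. Qed.

Lemma hyperplane_coordE x : hyperplane a b x -> x ord0 k = hyperplane_coord x.
Proof.
rewrite /hyperplane /= /dotv (bigD1 k) //= => xH.
by apply: (mulfI ak); rewrite mulrCA divff // mulr1; lra.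
Qed.

Lemma eq_hyperplane_coord x y :
  (forall i, i != k -> x ord0 i = y ord0 i) -> hyperplane_coord x = hyperplane_coord y.
Proof.
by move=> xy; rewrite /hyperplane_coord; congr (- (b + _) / _); apply: eq_bigr => i /xy ->.
Qed.

Lemma hyperplane_coord_lipschitz x y (w : R) : 0 <= w ->
  (forall i, i != k -> `|x ord0 i - y ord0 i| <= w) ->
  `|hyperplane_coord x - hyperplane_coord y| <= slope * w.
Proof.
move=> w_ge0 xy; rewrite /hyperplane_coord -mulrBl normrM normfV /slope mulrAC.
rewrite ler_pM2r ?invr_gt0 ?normr_gt0 //.
rewrite (_ : _ - _ = - \sum_(i | i != k) (a ord0 i * x ord0 i - a ord0 i * y ord0 i));
  last by rewrite sumrB; ring.
rewrite normrN.
apply: le_trans (ler_norm_sum _ _ _) _.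
apply: (@le_trans _ _ (\sum_(i | i != k) `|a ord0 i| * w)).
  by apply: ler_sum => i ik; rewrite -mulrBr normrM ler_wpM2l //; apply: xy.
by rewrite -mulr_suml ler_wpM2r // [X in _ <= X](bigD1 k) //= lerDr.
Qed.

Let d_gt0 : (0 < d)%N.
Proof. exact: leq_ltn_trans (leq0n k) (ltn_ord k). Qed.

Section cube_cover.
Variables (M : R) (N : nat).
Hypothesis M_ge0 : 0 <= M.

Let w := 2 * M / N.+1%:R.
Let h := 2 * slope * w / N.+1%:R.
Let cell := {ffun 'I_d -> 'I_N.+1}.
Let corner (t : cell) : 'rV[R]_d := \row_i (- M + (t i)%:R * w).
Let base (t : cell) := hyperplane_coord (corner t) - slope * w.
(* Cell t is the column of width w over the grid point [corner t], sliced along e_k into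
   N.+1 boxes of height h starting at [base t], the lowest point the hyperplane can reach
   over that column. *)
Let lo (t : cell) : 'rV[R]_d :=
  \row_i (if i == k then base t + (t k)%:R * h else corner t ord0 i).
Let hi (t : cell) : 'rV[R]_d :=
  \row_i (if i == k then base t + (t k).+1%:R * h else corner t ord0 i + w).

Let Nw : N.+1%:R * w = 2 * M.
Proof. by rewrite /w mulrC divfK ?pnatr_eq0. Qed.

Let Nh : N.+1%:R * h = 2 * slope * w.
Proof. by rewrite /h mulrC divfK ?pnatr_eq0. Qed.

Let w_ge0 : 0 <= w.
Proof. by rewrite divr_ge0 ?mulr_ge0. Qed.

Let h_ge0 : 0 <= h.
Proof. by rewrite divr_ge0 // mulr_ge0 // mulr_ge0. Qed.

Let lo_le_hi t i : lo t ord0 i <= hi t ord0 i.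
Proof.
rewrite !mxE; case: ifP => _; last by rewrite lerDl.
by rewrite lerD2l ler_wpM2r // ler_nat.
Qed.

Let hyperplane_cube_cover :
  hyperplane a b `&` cube M `<=` \bigcup_t box (lo t) (hi t).
Proof.
move=> x [xH xM].
have x_cell i : exists m : 'I_N.+1, m%:R * w <= x ord0 i + M <= m.+1%:R * w.
  by apply: exists_grid_cell; rewrite Nw; have := xM i; rewrite !mxE => /andP[]; lra.
have [g g_cell] := fin_all_exists x_cell.
pose t0 : cell := [ffun i => g i].
have k_near : `|x ord0 k - hyperplane_coord (corner t0)| <= slope * w.
  rewrite (hyperplane_coordE xH); apply: hyperplane_coord_lipschitz => // i _.
  by have := g_cell i; rewrite !mxE ffunE ler_norml => /andP[]; lra.
have [m m_cell] : exists m : 'I_N.+1, m%:R * h <= x ord0 k - base t0 <= m.+1%:R * h.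
  apply: exists_grid_cell; rewrite Nh; move: k_near; rewrite ler_norml /base.
  by have := mulr_ge0 slope_ge0 w_ge0; move=> ? /andP[]; lra.
pose t : cell := [ffun i => if i == k then m else g i].
have base_t : base t = base t0.
  rewrite /base (@eq_hyperplane_coord _ (corner t0)) // => i ik.
  by rewrite !mxE !ffunE (negbTE ik).
exists t => // i; rewrite !mxE; case: eqP => [->|/eqP ik].
  by rewrite base_t ffunE eqxx; move: m_cell => /andP[]; lra.
by rewrite !ffunE (negbTE ik); have := g_cell i; move=> /andP[]; lra.
Qed.

Let box_vol_cell t : box_vol (lo t) (hi t) = h * w ^+ d.-1.
Proof.
rewrite /box_vol (bigD1 k) //= !mxE eqxx (eq_bigr (fun=> w)); last first.
  by move=> i /negbTE ik; rewrite !mxE ik addrAC subrr add0r.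
by rewrite prodr_const cardC1 card_ord -natr1; congr (_ * _); ring.
Qed.

Let cells_volume :
  \sum_t box_vol (lo t) (hi t) = 2 * slope * (2 * M) ^+ d / N.+1%:R.
Proof.
rewrite (eq_bigr _ (fun t _ => box_vol_cell t)) sumr_const card_ffun !card_ord.
rewrite -(mulr_natr (h * _)) natrX -Nw /h.
have dE := prednK d_gt0; move: (d.-1) dE => e <-.
rewrite [in RHS]exprMn !exprS; field.
by rewrite addrC natr1 pnatr_eq0.
Qed.

Lemma hyperplane_cube_outer_le :
  (lebesgue_outer (hyperplane a b `&` cube M)
     <= (2 * slope * (2 * M) ^+ d / N.+1%:R)%:E)%E.
Proof.
rewrite -cells_volume.
exact: lebesgue_outer_le_fincover d_gt0 lo_le_hi hyperplane_cube_cover.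
Qed.

End cube_cover.

Lemma hyperplane_cube_null M : 0 <= M -> lebesgue_null (hyperplane a b `&` cube M).
Proof.
move=> M_ge0; apply/lebesgue_nullP => e e0.
apply: le_trans (hyperplane_cube_outer_le (Num.truncn (2 * slope * (2 * M) ^+ d / e)) M_ge0) _.
rewrite lee_fin (ler_pdivrMr _ _ (ltr0Sn _ _)) [e * _]mulrC -ler_pdivrMr //.
exact/ltW/truncnS_gt.
Qed.

Lemma hyperplane_null : lebesgue_null (hyperplane a b).
Proof.
apply: (@lebesgue_nullS _ _ _ (\bigcup_m (hyperplane a b `&` cube m%:R))).
  move=> x xH; exists (Num.truncn `|x|).+1 => //; split => // i; rewrite !mxE -ler_norml.
  exact/ltW/(le_lt_trans (row_coord_le_norm x i))/truncnS_gt.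
by apply: lebesgue_null_bigcup => m; apply: hyperplane_cube_null.
Qed.

End hyperplane_null.

Lemma cvg_heaviside (R : realType) (T : Type) (F : set_system T) (FF : Filter F)
    (g : T -> R) (v : R) :
  v != 0 -> g @ F --> v -> heaviside (g t) @[t --> F] --> heaviside v.
Proof.
move=> v_neq0 g_v; apply: cvg_near_cst; rewrite /heaviside.
have [v_gt0|v_le0] := ltP 0 v.
  by rewrite ltW //; near=> t; rewrite ltW //; near: t; exact: cvgr_gt g_v _ v_gt0.
have v_lt0 : v < 0 by rewrite lt_neqAle v_neq0.
rewrite leNgt v_lt0; near=> t; rewrite leNgt ifN //; apply/negPn; near: t.
exact: cvgr_lt g_v _ v_lt0.
Unshelve. all: by end_near. Qed.

Lemma cvg_dotvl (R : realType) (d : nat) (T : Type) (F : set_system T) (FF : Filter F)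
    (a : T -> 'rV[R]_d) (a0 x : 'rV[R]_d) :
  a @ F --> a0 -> dotv (a t) x @[t --> F] --> dotv a0 x.
Proof.
move=> a_cvg; apply: (cvg_big add_continuous) => // i _; apply: cvgM; last exact: cvg_cst.
exact: (cvg_comp _ _ a_cvg (@coord_continuous _ _ _ ord0 i a0)).
Qed.

Lemma fTheta_cvg (R : realType) (d : nat) (a : nat -> 'rV[R]_d) (b : nat -> R)
    (a0 : 'rV[R]_d) (b0 : R) (x : 'rV[R]_d) :
  (fun n => (a n, b n)) @ \oo --> (a0, b0) -> ~ hyperplane a0 b0 x ->
  (fun n => fTheta (a n) (b n) x) @ \oo --> fTheta a0 b0 x.
Proof.
move=> ab_cvg /eqP x_off; apply: cvg_heaviside x_off _; apply: cvgD.
  by apply: cvg_dotvl; exact: (cvg_comp _ _ ab_cvg cvg_fst).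
exact: (cvg_comp _ _ ab_cvg cvg_snd).
Qed.

Lemma dotv0l (R : realType) (d : nat) (x : 'rV[R]_d) : dotv 0 x = 0.
Proof. by rewrite /dotv big1 // => i _; rewrite mxE mul0r. Qed.

Lemma dotv_deltal (R : realType) (d : nat) (k : 'I_d) (x : 'rV[R]_d) :
  dotv (delta_mx 0 k) x = x ord0 k.
Proof.
rewrite /dotv (bigD1 k) //= big1 => [|i /negbTE ik]; rewrite mxE.
  by rewrite eqxx mul1r addr0.
by rewrite ik mul0r.
Qed.

Lemma delta_mx_neq0 (R : realType) (d : nat) (k : 'I_d) : delta_mx 0 k != 0 :> 'rV[R]_d.
Proof. by apply/rV0Pn; exists k; rewrite mxE !eqxx oner_eq0. Qed.

Lemma fTheta_const_on_bounded (R : realType) (d : nat) (k : 'I_d) (Om : set 'rV[R]_d)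
    (b0 : R) :
  bounded_set Om ->
  exists b' : R, forall x, Om x -> fTheta 0 b0 x = fTheta (delta_mx 0 k) b' x.
Proof.
case=> M [_ Om_le]; exists (if 0 <= b0 then M + 2 else - (M + 2)) => x Omx.
have : `|x ord0 k| <= M + 1.
  by apply: le_trans (row_coord_le_norm x k) (Om_le _ _ _ Omx); rewrite ltrDl.
rewrite /fTheta /heaviside dotv0l add0r dotv_deltal ler_norml => /andP[x_ge x_le].
by case: ifP => _; case: ifP => //; lra.
Qed.

Theorem mainTheorem15 (R : realType) (d : nat) (hd : (0 < d)%N)
  (Om : set 'rV[R]_d) (hdom : domain Om)
  (hfin : (lebesgue_outer Om < +oo)%E) :
  (forall (a0 : 'rV[R]_d) (b0 : R), a0 != 0 ->
     forall (a : nat -> 'rV[R]_d) (b : nat -> R),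
       (fun n => (a n, b n)) @ \oo --> (a0, b0) ->
       lebesgue_null [set x | Om x /\
         ~ ((fun n => fTheta (a n) (b n) x) @ \oo --> fTheta a0 b0 x)]) /\
  (bounded_set Om ->
     forall b0 : R, exists (a' : 'rV[R]_d) (b' : R),
       a' != 0 /\ forall x, Om x -> fTheta 0 b0 x = fTheta a' b' x).
Proof.
split=> [a0 b0 /rV0Pn[k a0k] a b ab_cvg | Om_bdd b0].
  apply: lebesgue_nullS (hyperplane_null b0 a0k) => x [_].
  by apply: contra_notP => x_off; exact: fTheta_cvg ab_cvg x_off.
have [b' fTheta_eq] := fTheta_const_on_bounded (Ordinal hd) b0 Om_bdd.
by exists (delta_mx 0 (Ordinal hd)), b'; split => //; exact: delta_mx_neq0.
Qed.
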